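(* Let $\Sigma_{\mathsf f}\in\mathbb R^{n\times n}$ be symmetric positive definite and $\mu_{\mathsf f}\in\mathbb R^n$. Consider the system, noise model and affine disturbance feedback policy described in the context, with decision space $\mathscr D$. Then the set of $(\bar{\bm u},\bm{\mathcal K})\in\mathscr D$ for which the resulting closed-loop system satisfies both $\mathrm{var}_x(T)\preceq\Sigma_{\mathsf f}$ (i.e. $\Sigma_{\mathsf f}-\mathrm{var}_x(T)$ is positive semidefinite) and $\mu_x(T)=\mu_{\mathsf f}$ is a convex subset of $\mathscr D$.
   Context: System: $x(t+1)=A(t)x(t)+B(t)u(t)+w(t)$, $t\in\{0,\dots,T-1\}$, $x(0)=x_0\sim\mathcal N(\mu_0,\Sigma_0)$ with $\Sigma_0$ symmetric positive definite; $w(0),\dots,w(T-1)$ i.i.d. Gaussian with mean $0$ and covariance $W$ (symmetric positive semidefinite), uncorrelated across time, and $\mathbb E[x_0w(t)^\top]=0$. Policy: $u(0)=\bar u(0)$, $u(t)=\bar u(t)+\sum_{\tau=0}^{t-1}K_{(t-1,\tau)}w(\tau)$ for $t\in\{1,\dots,T-1\}$, with $K_{(t-1,\tau)}\in\mathbb R^{m\times n}$. $\bar{\bm u}$ is the vertical concatenation of $\bar u(0),\dots,\bar u(T-1)$; $\bm{\mathcal K}:=\begin{bmatrix}0&0\\ \mathbf K&0\end{bmatrix}\in\mathbb R^{Tm\times Tn}$ with $\mathbf K$ block lower triangular having $(i,j)$ block $K_{(i,j)}$, $0\le j\le i\le T-2$, so that the stacked input is $\bm u=\bar{\bm u}+\bm{\mathcal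 K}\bm w$ with $\bm w$ the concatenation of $w(0),\dots,w(T-1)$. $\mathscr D$ is the set of all pairs $(\bar{\bm u},\bm{\mathcal K})\in\mathbb R^{Tm}\times\mathbb R^{Tm\times Tn}$ with $\bm{\mathcal K}$ of this structure. $\mu_x(T)=\mathbb E[x(T)]$ and $\mathrm{var}_x(T)=\mathbb E[(x(T)-\mu_x(T))(x(T)-\mu_x(T))^\top]$; $\preceq$ is the Loewner order. *)

From HB Require Import structures.
From mathcomp Require Import all_boot all_order all_algebra.
From mathcomp Require Import all_classical all_reals all_analysis.
Set Implicit Arguments. Unset Strict Implicit. Unset Printing Implicit Defensive.
Import Order.TTheory GRing.Theory Num.Theory.
Local Open Scope classical_set_scope.
Local Open Scope ring_scope.

(* Block index: row i of block t in a stacked vector of T blocks of size m,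
   i.e. the index t*m + i of 'I_(T*m). *)
Lemma blk_proof (T m : nat) (t : 'I_T) (i : 'I_m) : (t * m + i < T * m)%N.
Proof.
have h1 : (t * m + i < t * m + m)%N by rewrite ltn_add2l.
apply: (leq_trans h1).
have -> : (t * m + m = t.+1 * m)%N by rewrite mulSn addnC.
by rewrite leq_mul2r ltn_ord orbT.
Qed.

Definition blk (T m : nat) (t : 'I_T) (i : 'I_m) : 'I_(T * m) :=
  Ordinal (blk_proof t i).

Section Defs.
Variables (R : realType) (T n m : nat).

Definition ubar_blk (ubar : 'cV[R]_(T * m)) (t : 'I_T) : 'cV[R]_m :=
  \col_i ubar (blk t i) 0.

Definition K_blk (Kc : 'M[R]_(T * m, T * n)) (t tau : 'I_T) : 'M[R]_(m, n) :=
  \matrix_(i, j) Kc (blk t i) (blk tau j).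

(* Structure of \mathcal K = [[0,0],[K,0]] with K block lower triangular:
   block (t, tau) may be nonzero only when tau < t (it is then K_{(t-1,tau)}). *)
Definition K_struct (Kc : 'M[R]_(T * m, T * n)) : Prop :=
  forall (t tau : 'I_T), (t <= tau)%N -> K_blk Kc t tau = 0.

Definition Dspace : set ('cV[R]_(T * m) * 'M[R]_(T * m, T * n))%type :=
  [set p | K_struct p.2].

Definition input (ubar : 'cV[R]_(T * m)) (Kc : 'M[R]_(T * m, T * n))
  {Om : Type} (w : 'I_T -> Om -> 'cV[R]_n) (t : 'I_T) (om : Om) : 'cV[R]_m :=
  ubar_blk ubar t + \sum_(tau < T) K_blk Kc t tau *m w tau om.

Fixpoint state (A : 'I_T -> 'M[R]_n) (B : 'I_T -> 'M[R]_(n, m))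
  (ubar : 'cV[R]_(T * m)) (Kc : 'M[R]_(T * m, T * n))
  {Om : Type} (x0 : Om -> 'cV[R]_n) (w : 'I_T -> Om -> 'cV[R]_n)
  (t : nat) (om : Om) : 'cV[R]_n :=
  match t with
  | 0 => x0 om
  | t'.+1 =>
    match insub t' : option 'I_T with
    | Some s => A s *m state A B ubar Kc x0 w t' om
                + B s *m input ubar Kc w s om + w s om
    | None => state A B ubar Kc x0 w t' om
    end
  end.

End Defs.

Section Moments.
Context {R : realType} {d : measure_display} {Om : measurableType d}.
Variable (P : probability Om R).

Definition mean_vec {k : nat} (X : Om -> 'cV[R]_k) : 'cV[R]_k :=
  \col_i fine ('E_P[fun om => X om i 0]).

Definition var_mat {k : nat} (X : Om -> 'cV[R]_k) : 'M[R]_k :=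
  \matrix_(i, j) fine (covariance P (fun om => X om i 0) (fun om => X om j 0)).

End Moments.

Definition symmetric {R : realType} {k : nat} (M : 'M[R]_k) : Prop := M^T = M.
Definition psd {R : realType} {k : nat} (M : 'M[R]_k) : Prop :=
  symmetric M /\ forall v : 'cV[R]_k, 0 <= (v^T *m M *m v) 0 0.
Definition pd {R : realType} {k : nat} (M : 'M[R]_k) : Prop :=
  symmetric M /\ forall v : 'cV[R]_k, v != 0 -> 0 < (v^T *m M *m v) 0 0.

Definition loewner_le {R : realType} {k : nat} (M1 M2 : 'M[R]_k) : Prop :=
  psd (M2 - M1).
Arguments Dspace R T n m : clear implicits.

From Pilot Require Import Defs.
From HB Require Import structures.
From mathcomp Require Import all_boot all_order all_algebra.
From mathcomp Require Import all_classical all_reals all_analysis.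
From mathcomp Require Import ring lra.
Set Implicit Arguments. Unset Strict Implicit. Unset Printing Implicit Defensive.
Import Order.TTheory GRing.Theory Num.Theory.
Local Open Scope classical_set_scope.
Local Open Scope ring_scope.

(** The policy feeds back past disturbances rather than the state, so for each
   outcome the closed-loop state is an affine function of the decision variable
   [(ubar, K)].  Hence the terminal mean is affine in it, while for the terminal
   covariance the identity
     Var (a X + b Y) + a b Var (X - Y) = a Var X + b Var Y      (a + b = 1)
   gives Var (a X + b Y) <= a Var X + b Var Y in the Loewner order when a, b >= 0. *)

Section closed_loop_affine.
Variables (R : realType) (T n m : nat).
Implicit Types (a b : R) (u : 'cV[R]_(T * m)) (K : 'M[R]_(T * m, T * n)).

Lemma ubar_blk_comb a b u1 u2 t :
  ubar_blk (a *: u1 + b *: u2) t = a *: ubar_blk u1 t + b *: ubar_blk u2 t.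
Proof. by apply/matrixP => i j; rewrite !mxE. Qed.

Lemma K_blk_comb a b K1 K2 t tau :
  K_blk (a *: K1 + b *: K2) t tau = a *: K_blk K1 t tau + b *: K_blk K2 t tau.
Proof. by apply/matrixP => i j; rewrite !mxE. Qed.

Lemma K_struct_comb a b K1 K2 :
  K_struct K1 -> K_struct K2 -> K_struct (a *: K1 + b *: K2).
Proof.
by move=> K1s K2s t tau le_t_tau; rewrite K_blk_comb K1s // K2s // !scaler0 addr0.
Qed.

Lemma input_comb a b u1 u2 K1 K2 {Om : Type} (w : 'I_T -> Om -> 'cV[R]_n) t om :
  input (a *: u1 + b *: u2) (a *: K1 + b *: K2) w t om
  = a *: input u1 K1 w t om + b *: input u2 K2 w t om.
Proof.
rewrite /input ubar_blk_comb.
under eq_bigr do rewrite K_blk_comb mulmxDl -!scalemxAl.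
by rewrite big_split -!scaler_sumr !scalerDr addrACA.
Qed.

Lemma state_comb (A : 'I_T -> 'M[R]_n) (B : 'I_T -> 'M[R]_(n, m))
    a b u1 u2 K1 K2 {Om : Type} (x0 : Om -> 'cV[R]_n) (w : 'I_T -> Om -> 'cV[R]_n) k :
  a + b = 1 ->
  state A B (a *: u1 + b *: u2) (a *: K1 + b *: K2) x0 w k
  =1 fun om => a *: state A B u1 K1 x0 w k om + b *: state A B u2 K2 x0 w k om.
Proof.
move=> ab1; elim: k => [|k IHk] om; cbn [state].
  by rewrite -scalerDl ab1 scale1r.
case: (insub k) => [s|//].
rewrite IHk input_comb (mulmxDr (A s)) (mulmxDr (B s) (a *: _)) -!scalemxAr.
rewrite -{1}[w s om]scale1r -ab1 scalerDl.
by rewrite !scalerDr [in X in X + _ = _]addrACA [LHS]addrACA.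
Qed.

End closed_loop_affine.

Section Lfun_mx.
Context {R : realType} {d : measure_display} {Om : measurableType d}.
Variable P : probability Om R.

Definition Lfun_mx (p : \bar R) {k l : nat} (X : Om -> 'M[R]_(k, l)) :=
  forall i j, (fun om => X om i j) \in Lfun P p.

Lemma Lfun2_Lfun1 (f : Om -> R) : f \in Lfun P 2%:E -> f \in Lfun P 1.
Proof. exact/Lfun_subset12/fin_num_measure. Qed.

Lemma Lfun_mx2_mx1 k l (X : Om -> 'M[R]_(k, l)) : Lfun_mx 2%:E X -> Lfun_mx 1 X.
Proof. by move=> XL i j; exact/Lfun2_Lfun1/XL. Qed.

Lemma Lfun2_of_integrable_sqr (f : Om -> R) : measurable_fun setT f ->
  P.-integrable setT (fun om => (f om ^+ 2)%:E) -> f \in Lfun P 2%:E.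
Proof.
move=> mf /integrableP[_ fin].
rewrite inE; apply/andP; split; first by rewrite inE.
rewrite inE /= /finite_norm unlock /Lnorm poweR_lty //.
apply: le_lt_trans fin.
by under eq_integral => x _ do
  rewrite abse_EFin poweR_EFin powR_mulrn // -normrX -abse_EFin.
Qed.

Variables (r : R) (r_ge1 : 1 <= r).
Local Notation Lr := (Lfun P r%:E).

Let r_ge1E : (1 <= r%:E)%E. Proof. by rewrite lee_fin. Qed.

Lemma LfunD (f g : Om -> R) : f \in Lr -> g \in Lr -> (fun om => f om + g om) \in Lr.
Proof. by move=> fL gL; have /(_ r_ge1E) := rpredD fL gL. Qed.

Lemma LfunZ (a : R) (f : Om -> R) : f \in Lr -> (fun om => a * f om) \in Lr.
Proof. by move=> fL; have /(_ r_ge1E) := rpredZ a fL. Qed.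

Lemma Lfun_lincomb (I : Type) (s : seq I) (c : I -> R) (F : I -> Om -> R) :
  (forall i, F i \in Lr) -> (fun om => \sum_(i <- s) c i * F i om) \in Lr.
Proof.
move=> FL.
by have /(_ r_ge1E xpredT) := rpred_sum s (fun i _ => rpredZ (c i) (FL i)); rewrite fct_sumE.
Qed.

Lemma Lfun_mx_cst k l (C : 'M[R]_(k, l)) : Lfun_mx r%:E (fun _ => C).
Proof. by move=> i j; exact: Lfun_cst. Qed.

Lemma Lfun_mxD k l (X Y : Om -> 'M[R]_(k, l)) :
  Lfun_mx r%:E X -> Lfun_mx r%:E Y -> Lfun_mx r%:E (fun om => X om + Y om).
Proof.
by move=> XL YL i j; under eq_fun do rewrite mxE; exact: LfunD.
Qed.

Lemma Lfun_mx_sum k l (I : Type) (s : seq I) (X : I -> Om -> 'M[R]_(k, l)) :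
  (forall i, Lfun_mx r%:E (X i)) -> Lfun_mx r%:E (fun om => \sum_(i <- s) X i om).
Proof.
move=> XL i j; under eq_fun do rewrite summxE.
by have /(_ r_ge1E xpredT) := rpred_sum s (fun t _ => XL t i j); rewrite fct_sumE.
Qed.

Lemma Lfun_mx_mull k l q (C : 'M[R]_(k, l)) (X : Om -> 'M[R]_(l, q)) :
  Lfun_mx r%:E X -> Lfun_mx r%:E (fun om => C *m X om).
Proof.
by move=> XL i j; under eq_fun do rewrite mxE; apply: Lfun_lincomb => t; exact: XL.
Qed.

Lemma Lfun_mx_state T n m (A : 'I_T -> 'M[R]_n) (B : 'I_T -> 'M[R]_(n, m))
    (u : 'cV[R]_(T * m)) (K : 'M[R]_(T * m, T * n))
    (x0 : Om -> 'cV[R]_n) (w : 'I_T -> Om -> 'cV[R]_n) :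
  Lfun_mx r%:E x0 -> (forall t, Lfun_mx r%:E (w t)) ->
  forall k, Lfun_mx r%:E (state A B u K x0 w k).
Proof.
move=> x0L wL; elim=> [|k IHk] //=; case: (insub k) => [s|//].
apply: Lfun_mxD; last exact: wL.
apply: Lfun_mxD; first exact: Lfun_mx_mull.
apply/Lfun_mx_mull/Lfun_mxD; first exact: Lfun_mx_cst.
by apply: Lfun_mx_sum => tau; exact: Lfun_mx_mull.
Qed.

End Lfun_mx.

Section psd.
Variables (R : realType) (k : nat).
Implicit Types M N : 'M[R]_k.

Lemma psdD M N : psd M -> psd N -> psd (M + N).
Proof.
move=> [Msym M_ge0] [Nsym N_ge0]; split; first by rewrite /Defs.symmetric linearD /= Msym Nsym.
by move=> v; rewrite mulmxDr mulmxDl mxE addr_ge0.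
Qed.

Lemma psdZ (a : R) M : 0 <= a -> psd M -> psd (a *: M).
Proof.
move=> a_ge0 [Msym M_ge0]; split; first by rewrite /Defs.symmetric linearZ /= Msym.
by move=> v; rewrite -scalemxAr -scalemxAl mxE mulr_ge0.
Qed.

End psd.

Section moments.
Context {R : realType} {d : measure_display} {Om : measurableType d}.
Variable P : probability Om R.
Local Notation L2 := (Lfun P 2%:E).
Implicit Types X Y Z : Om -> R.

Let two_ge1 : 1 <= 2 :> R. Proof. by rewrite ler1n. Qed.

Definition cov X Y : R := fine (covariance P X Y).

Lemma covC X Y : cov X Y = cov Y X.
Proof. by rewrite /cov covarianceC. Qed.

Lemma cov_cstl (c : R) Z : cov (fun=> c) Z = 0.
Proof. by rewrite /cov covariance_cst_l. Qed.

Lemma covariance2_fin_num X Y : X \in L2 -> Y \in L2 ->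
  covariance P X Y \is a fin_num.
Proof.
by move=> XL YL; apply: covariance_fin_num; [exact: Lfun2_Lfun1..|exact: Lfun2_mul_Lfun1].
Qed.

Lemma covDl X Y Z : X \in L2 -> Y \in L2 -> Z \in L2 ->
  cov (fun om => X om + Y om) Z = cov X Z + cov Y Z.
Proof.
move=> XL YL ZL; have -> : (fun om => X om + Y om) = (X \+ Y)%R by [].
by rewrite /cov covarianceDl // fineD // covariance2_fin_num.
Qed.

Lemma covZl (a : R) X Z : X \in L2 -> Z \in L2 ->
  cov (fun om => a * X om) Z = a * cov X Z.
Proof.
move=> XL ZL.
have -> : (fun om => a * X om) = (a \o* X)%R by apply/funext => om /=; rewrite mulrC.
rewrite /cov covarianceZl; [|exact: Lfun2_Lfun1..|exact: Lfun2_mul_Lfun1].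
by rewrite fineM // covariance2_fin_num.
Qed.

Lemma cov_suml (I : Type) (s : seq I) (c : I -> R) (F : I -> Om -> R) Z :
  (forall i, F i \in L2) -> Z \in L2 ->
  cov (fun om => \sum_(i <- s) c i * F i om) Z = \sum_(i <- s) c i * cov (F i) Z.
Proof.
move=> FL ZL; elim: s => [|i s IHs].
  by rewrite big_nil; under eq_fun do rewrite big_nil; exact: cov_cstl.
under eq_fun do rewrite big_cons.
by rewrite big_cons covDl ?covZl ?IHs //; [exact: LfunZ | exact: Lfun_lincomb].
Qed.

Lemma cov_ge0 X : 0 <= cov X X.
Proof. by rewrite /cov fine_ge0 // variance_ge0. Qed.

Lemma cov_combl (a b : R) X Y Z : X \in L2 -> Y \in L2 -> Z \in L2 ->
  cov (fun om => a * X om + b * Y om) Z = a * cov X Z + b * cov Y Z.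
Proof. by move=> XL YL ZL; rewrite covDl ?covZl //; exact: LfunZ. Qed.

Lemma cov_comb (a b : R) X Y X' Y' : a + b = 1 ->
  X \in L2 -> Y \in L2 -> X' \in L2 -> Y' \in L2 ->
  cov (fun om => a * X om + b * Y om) (fun om => a * X' om + b * Y' om)
  + a * b * cov (fun om => X om - Y om) (fun om => X' om - Y' om)
  = a * cov X X' + b * cov Y Y'.
Proof.
move=> ab1 XL YL X'L Y'L.
have subE (f g : Om -> R) : (fun om => f om - g om) = fun om => 1 * f om + (-1) * g om.
  by apply/funext => om; rewrite mul1r mulN1r.
rewrite !subE !cov_combl ?(LfunD two_ge1) ?LfunZ //.
rewrite !(covC _ (fun om => _ + _)) !cov_combl // (covC X' X) (covC Y' Y).
have -> : b = 1 - a by lra.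
ring.
Qed.

Lemma tr_var_mat k (X : Om -> 'cV[R]_k) : (var_mat P X)^T = var_mat P X.
Proof. by apply/matrixP => i j; rewrite !mxE covarianceC. Qed.

Lemma qform_var_mat k (X : Om -> 'cV[R]_k) (v : 'cV[R]_k) : Lfun_mx P 2%:E X ->
  (v^T *m var_mat P X *m v) 0 0
  = cov (fun om => (v^T *m X om) 0 0) (fun om => (v^T *m X om) 0 0).
Proof.
move=> XL.
have -> : (fun om => (v^T *m X om) 0 0) = fun om => \sum_i v i 0 * X om i 0.
  by apply/funext => om; rewrite mxE; apply: eq_bigr => i _; rewrite mxE.
have XiL i : (fun om => X om i 0) \in L2 by exact: XL.
rewrite cov_suml //; last exact: Lfun_lincomb.
under eq_bigr do rewrite covC cov_suml //.
rewrite mxE; apply: eq_bigr => i _; rewrite mxE mulr_suml mulr_sumr.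
by apply: eq_bigr => j _; rewrite !mxE /cov; ring.
Qed.

Lemma psd_var_mat k (X : Om -> 'cV[R]_k) : Lfun_mx P 2%:E X -> psd (var_mat P X).
Proof.
by move=> XL; split=> [|v]; [exact: tr_var_mat | rewrite qform_var_mat // cov_ge0].
Qed.

Lemma var_mat_comb k (a b : R) (X Y : Om -> 'cV[R]_k) : a + b = 1 ->
  Lfun_mx P 2%:E X -> Lfun_mx P 2%:E Y ->
  var_mat P (fun om => a *: X om + b *: Y om)
  + (a * b) *: var_mat P (fun om => X om - Y om)
  = a *: var_mat P X + b *: var_mat P Y.
Proof.
move=> ab1 XL YL; apply/matrixP => i j; rewrite !mxE.
have entry_comb (Z1 Z2 : Om -> 'cV[R]_k) (c1 c2 : R) l :
    (fun om => (c1 *: Z1 om + c2 *: Z2 om) l 0) = fun om => c1 * Z1 om l 0 + c2 * Z2 om l 0.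
  by apply/funext => om; rewrite !mxE.
have entryB (Z1 Z2 : Om -> 'cV[R]_k) l :
    (fun om => (Z1 om - Z2 om) l 0) = fun om => Z1 om l 0 - Z2 om l 0.
  by apply/funext => om; rewrite !mxE.
by rewrite !entry_comb !entryB; apply: cov_comb.
Qed.

Lemma mean_vec_comb k (a b : R) (X Y : Om -> 'cV[R]_k) :
  Lfun_mx P 1 X -> Lfun_mx P 1 Y ->
  mean_vec P (fun om => a *: X om + b *: Y om) = a *: mean_vec P X + b *: mean_vec P Y.
Proof.
move=> XL YL; apply/matrixP => i j; rewrite !mxE.
set Xi := fun om => X om i 0; set Yi := fun om => Y om i 0.
have -> : (fun om => (a *: X om + b *: Y om) i 0) = (a \o* Xi \+ b \o* Yi)%R.
  by apply/funext => om; rewrite !mxE /= mulrC (mulrC b).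
have XiL : Xi \in Lfun P 1 by exact: XL.
have YiL : Yi \in Lfun P 1 by exact: YL.
rewrite expectationD ?Lfun_scale // !expectationZl //.
by rewrite fineD ?fin_numM ?expectation_fin_num // !fineM ?expectation_fin_num.
Qed.

Lemma loewner_le_var_mat_comb k (a b : R) (X Y : Om -> 'cV[R]_k) (S : 'M[R]_k) :
  0 <= a -> 0 <= b -> a + b = 1 -> Lfun_mx P 2%:E X -> Lfun_mx P 2%:E Y ->
  loewner_le (var_mat P X) S -> loewner_le (var_mat P Y) S ->
  loewner_le (var_mat P (fun om => a *: X om + b *: Y om)) S.
Proof.
move=> a_ge0 b_ge0 ab1 XL YL XS YS.
have DL : Lfun_mx P 2%:E (fun om => X om - Y om).
  by move=> i j; under eq_fun do rewrite !mxE; exact: (rpredB (XL i j) (YL i j)).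
rewrite /loewner_le; have -> : S - var_mat P (fun om => a *: X om + b *: Y om)
    = a *: (S - var_mat P X) + b *: (S - var_mat P Y)
      + (a * b) *: var_mat P (fun om => X om - Y om).
  apply/matrixP => i j; move/matrixP/(_ i j): (var_mat_comb ab1 XL YL).
  rewrite !mxE => comb_ij; have b_eq : b = 1 - a by lra.
  rewrite b_eq in comb_ij *; lra.
apply: psdD; first by apply: psdD; exact: psdZ.
by apply: psdZ; [exact: mulr_ge0 | exact: psd_var_mat].
Qed.

End moments.

Theorem proposition4 (R : realType) (T n m : nat)
  (A : 'I_T -> 'M[R]_n) (B : 'I_T -> 'M[R]_(n, m))
  (mu0 : 'cV[R]_n) (Sigma0 W : 'M[R]_n)
  (d : measure_display) (Om : measurableType d) (P : probability Om R)
  (x0 : Om -> 'cV[R]_n) (w : 'I_T -> Om -> 'cV[R]_n)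
  (Sigmaf : 'M[R]_n) (muf : 'cV[R]_n) :
  pd Sigma0 -> psd W -> pd Sigmaf ->
  (* measurability and finite first/second moments *)
  (forall i, measurable_fun setT (fun om => x0 om i 0)) ->
  (forall t i, measurable_fun setT (fun om => w t om i 0)) ->
  (forall i, P.-integrable setT (fun om => ((x0 om i 0) ^+ 2)%:E)) ->
  (forall t i, P.-integrable setT (fun om => ((w t om i 0) ^+ 2)%:E)) ->
  (* x0 has mean mu0 and covariance Sigma0 *)
  (forall i, ('E_P[(fun om => x0 om i 0)%R] = ((mu0 i 0)%R)%:E)%E) ->
  (forall i j, covariance P (fun om => x0 om i 0) (fun om => x0 om j 0)
               = (Sigma0 i j)%:E) ->
  (* w(t) has mean 0, covariance W, uncorrelated across time *)
  (forall t i, ('E_P[(fun om => w t om i 0)%R] = 0)%E) ->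
  (forall t s i j, covariance P (fun om => w t om i 0) (fun om => w s om j 0)
               = (if t == s then W i j else 0)%:E) ->
  (* E[x0 w(t)^T] = 0 *)
  (forall t i j, ('E_P[(fun om => x0 om i 0 * w t om j 0)%R] = 0)%E) ->
  (* x0 ~ N(mu0, Sigma0) (characteristic function) *)
  (forall a : 'cV[R]_n,
     ('E_P[(fun om => cos ((a^T *m x0 om) 0 0))%R]
       = (cos ((a^T *m mu0) 0 0) * expR (- ((a^T *m Sigma0 *m a) 0 0) / 2))%R%:E)%E /\
     ('E_P[(fun om => sin ((a^T *m x0 om) 0 0))%R]
       = (sin ((a^T *m mu0) 0 0) * expR (- ((a^T *m Sigma0 *m a) 0 0) / 2))%R%:E)%E) ->
  (* w(0), ..., w(T-1) i.i.d. N(0, W) (joint characteristic function) *)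
  (forall a : 'I_T -> 'cV[R]_n,
     ('E_P[(fun om => cos (\sum_(t < T) ((a t)^T *m w t om) 0 0))%R]
       = (expR (- (\sum_(t < T) ((a t)^T *m W *m a t) 0 0) / 2))%R%:E)%E /\
     ('E_P[(fun om => sin (\sum_(t < T) ((a t)^T *m w t om) 0 0))%R] = 0)%E) ->
  let S := [set p : ('cV[R]_(T * m) * 'M[R]_(T * m, T * n))%type |
             Dspace R T n m p /\
             loewner_le (var_mat P (state A B p.1 p.2 x0 w T)) Sigmaf /\
             mean_vec P (state A B p.1 p.2 x0 w T) = muf] in
  S `<=` Dspace R T n m /\ convex_set S.
Proof.
move=> _ _ _ x0_meas w_meas x0_sqr w_sqr _ _ _ _ _ _ _ S.
have x0L : Lfun_mx P 2%:E x0.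
  by move=> i j; rewrite (ord1 j); exact: Lfun2_of_integrable_sqr.
have wL t : Lfun_mx P 2%:E (w t).
  by move=> i j; rewrite (ord1 j); exact: Lfun2_of_integrable_sqr.
have stateL u K : Lfun_mx P 2%:E (state A B u K x0 w T).
  by apply: Lfun_mx_state; rewrite ?ler1n.
split=> [p [] //|[u1 K1] [u2 K2] l].
rewrite !inE /S /= => -[D1 [V1 M1]] [D2 [V2 M2]].
rewrite -[unstable.onem _]/(1 - l%:num).
have [t_ge0 t'_ge0] : 0 <= l%:num /\ 0 <= 1 - l%:num.
  by rewrite subr_ge0; split; [exact: ge0 | exact: le1].
set t := l%:num in t_ge0 t'_ge0 *.
have tt'1 : t + (1 - t) = 1 by rewrite addrC subrK.
have -> : state A B (t *: u1 + (1 - t) *: u2) (t *: K1 + (1 - t) *: K2) x0 w T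
    = fun om => t *: state A B u1 K1 x0 w T om + (1 - t) *: state A B u2 K2 x0 w T om.
  by apply/funext; exact: state_comb.
split; first exact: K_struct_comb.
split; first exact: loewner_le_var_mat_comb.
rewrite mean_vec_comb; try exact/Lfun_mx2_mx1/stateL.
by rewrite M1 M2 -scalerDl tt'1 scale1r.
Qed.
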